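(* Let $r\ge 1$, $n$ be integers and let $\sigma,\sigma':\mathbb{Z}_n\to\{0,1\}$ be configurations with $\mathrm{maj}_r(\sigma)=\sigma'$. If $i\in\mathbb{Z}_n$ satisfies $\sigma'(i)\ne\sigma'(i+1)$, then $\#_0(\sigma[[i-r+1,i+r]])=\#_1(\sigma[[i-r+1,i+r]])$, where $[i-r+1,i+r]=\Gamma_r(i)\cap\Gamma_r(i+1)$.
   Context: Cells are elements of $\mathbb{Z}_n$, arithmetic mod $n$; $[a,b]$ denotes the cyclic interval $a,a+1,\dots,b$ and $\Gamma_r(i)=[i-r,i+r]$. For a configuration $\sigma$ and $\beta\in\{0,1\}$, $\#_\beta(\sigma[I])$ counts cells $\ell\in I$ with $\sigma(\ell)=\beta$. The majority rule with radius $r$: $\mathrm{maj}_r(\sigma)(i)=0$ if $\#_0(\sigma[\Gamma_r(i)])>\#_1(\sigma[\Gamma_r(i)])$ and $=1$ otherwise. *)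

From mathcomp Require Import all_boot all_order all_algebra.
Set Implicit Arguments. Unset Strict Implicit. Unset Printing Implicit Defensive.

(* Cells are 'I_n, read as Z_n.  A configuration is a map 'I_n -> bool
   (false = 0, true = 1). *)
Definition config (n : nat) := 'I_n -> bool.

Definition cyc (n : nat) (x : int) : nat := `|(x %% (n%:Z))%Z|%N.

Definition cycI (n : nat) (s : int) (len : nat) : {set 'I_n} :=
  [set l : 'I_n | [exists j : 'I_len, (l : nat) == cyc n (s + (j : nat)%:Z)%R]].

Definition Gamma (n r : nat) (i : 'I_n) : {set 'I_n} :=
  cycI n ((i : nat)%:Z - r%:Z)%R (2 * r + 1).

Definition cnt (n : nat) (beta : bool) (sigma : config n) (I : {set 'I_n}) : nat :=
  #|[set l in I | sigma l == beta]|.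

Definition maj (n r : nat) (sigma : config n) : config n :=
  fun i => if cnt false sigma (Gamma r i) > cnt true sigma (Gamma r i)
           then false else true.

(* The two windows Gamma_r(i) and Gamma_r(i+1) both consist of the 2r-cell
   window I = [i-r+1, i+r] plus one extra cell.  If n <= 2r both windows are
   the whole ring, so the majority cannot change between i and i+1.  Otherwise
   |I| = 2r is even, so a strict majority in I wins by at least 2 and survives
   the addition of one cell; hence a change of majority forces a tie in I. *)
From mathcomp Require Import all_boot all_algebra zify.
Import GRing.Theory.

Set Implicit Arguments.
Unset Strict Implicit.
Unset Printing Implicit Defensive.

Section CyclicIntervals.

Variable n : nat.
Hypothesis n_gt0 : (0 < n)%N.

Lemma cycD (s : int) (j : nat) : cyc n (s + j%:Z)%R = ((cyc n s + j) %% n)%N.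
Proof.
have n_neq0 : (n%:Z != 0)%R by rewrite eqz_nat -lt0n.
rewrite /cyc.
have -> : (s + j%:Z = (s %% n%:Z)%Z + j%:Z %[mod n%:Z])%Z by rewrite modzDml.
by rewrite -[X in (X + _)%R](gez0_abs (modz_ge0 s n_neq0)) -PoszD modz_nat.
Qed.

Lemma cyc_lt (s : int) : (cyc n s < n)%N.
Proof.
have n_neq0 : (n%:Z != 0)%R by rewrite eqz_nat -lt0n.
by rewrite -ltz_nat /cyc (gez0_abs (modz_ge0 s n_neq0)) ltz_pmod.
Qed.

Definition cell (s : int) : 'I_n := Ordinal (cyc_lt s).

Lemma mem_cycI (s : int) (len : nat) (l : 'I_n) :
  (l \in cycI n s len) = [exists j : 'I_len, val l == ((cyc n s + j) %% n)%N].
Proof. by rewrite inE; apply: eq_existsb => j; rewrite cycD. Qed.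

Lemma eq_cycI (s s' : int) (len : nat) :
  cyc n s = cyc n s' -> cycI n s len = cycI n s' len.
Proof. by move=> eq_s; apply/setP => l; rewrite !mem_cycI eq_s. Qed.

Lemma cycI_cons (s : int) (len : nat) :
  cycI n s len.+1 = cell s |: cycI n (s + 1)%R len.
Proof.
apply/setP => l; rewrite in_setU1 !mem_cycI cycD.
apply/existsP/orP => [[[[|j] lt_j] /= /eqP eq_l]|].
- by left; apply/eqP/val_inj => /=; rewrite eq_l addn0 modn_small ?cyc_lt.
- right; apply/existsP; exists (Ordinal (lt_j : j < len)%N).
  by rewrite eq_l /= modnDml -addnA.
case=> [/eqP -> | /existsP [j /eqP ->]].
- by exists ord0; rewrite /= addn0 modn_small ?cyc_lt.
- by exists (lift ord0 j); rewrite /= modnDml -addnA.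
Qed.

Lemma cycI_rcons (s : int) (len : nat) :
  cycI n s len.+1 = cell (s + len%:Z)%R |: cycI n s len.
Proof.
apply/setP => l; rewrite in_setU1 !mem_cycI.
apply/existsP/orP => [[j /eqP eq_l]|].
- have [lt_j | ge_j] := ltnP j len.
    by right; apply/existsP; exists (Ordinal lt_j); rewrite eq_l.
  have eq_j : (j : nat) = len by apply/eqP; rewrite eqn_leq ge_j andbT -ltnS.
  by left; apply/eqP/val_inj; rewrite /= cycD -eq_j -eq_l.
case=> [/eqP -> | /existsP [j /eqP ->]].
- by exists ord_max; rewrite /= cycD.
- by exists (widen_ord (leqnSn len) j).
Qed.

Lemma cycI_full (s : int) (len : nat) : (n <= len)%N -> cycI n s len = setT.
Proof.
move=> le_n_len; apply/setP => l; rewrite mem_cycI inE; apply/existsP.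
have lt_j : ((l + (n - cyc n s)) %% n < len)%N.
  exact: leq_trans (ltn_pmod _ n_gt0) le_n_len.
exists (Ordinal lt_j) => /=.
by rewrite modnDmr addnCA subnKC ?(ltnW (cyc_lt s)) // modnDr modn_small.
Qed.

Lemma card_cycI (s : int) (len : nat) : (len <= n)%N -> #|cycI n s len| = len.
Proof.
move=> le_len_n.
pose f (j : 'I_len) : 'I_n := Ordinal (ltn_pmod (cyc n s + j) n_gt0).
have -> : cycI n s len = f @: setT.
  apply/setP => l; rewrite mem_cycI; apply/existsP/imsetP.
  - by case=> j /eqP eq_l; exists j => //; apply: val_inj.
  - by case=> j _ ->; exists j.
rewrite card_imset ?cardsT ?card_ord // => j k /(congr1 val) /eqP.
have small (m : 'I_len) : (m < n)%N by exact: leq_trans (ltn_ord m) le_len_n.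
by rewrite /= eqn_modDl !modn_small // => /eqP /val_inj.
Qed.

End CyclicIntervals.

Section Counting.

Variables (n : nat) (sigma : config n).

Lemma cnt_false_true (X : {set 'I_n}) :
  cnt false sigma X + cnt true sigma X = #|X|.
Proof.
rewrite /cnt -(cardsID [set l | sigma l] X) addnC.
by congr (_ + _); apply: eq_card => l; rewrite !inE;
  case: (sigma l); rewrite ?andbT ?andbF.
Qed.

Lemma cnt_subset (b : bool) (X Y : {set 'I_n}) :
  X \subset Y -> (cnt b sigma X <= cnt b sigma Y)%N.
Proof.
move=> sXY; apply/subset_leq_card/subsetP => l; rewrite !inE.
by case/andP => /(subsetP sXY) -> ->.
Qed.

Lemma cnt_setU1_le (b : bool) (p : 'I_n) (X : {set 'I_n}) :
  (cnt b sigma (p |: X) <= cnt b sigma X + 1)%N.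
Proof.
rewrite /cnt -(cards1 p) addnC; apply: leq_trans (leq_card_setU _ _).
apply/subset_leq_card/subsetP => l; rewrite !inE.
by case/andP => /orP [-> // | -> ->]; rewrite orbT.
Qed.

Lemma majority_setU1 (p : 'I_n) (X : {set 'I_n}) :
  ~~ odd #|X| -> cnt false sigma X != cnt true sigma X ->
  (cnt true sigma (p |: X) < cnt false sigma (p |: X))%N =
  (cnt true sigma X < cnt false sigma X)%N.
Proof.
move=> even_X /eqP neq_cnt.
have even_sum := odd_double_half #|X|.
rewrite (negbTE even_X) add0n -muln2 -cnt_false_true in even_sum.
have := cnt_subset false (subsetU1 p X); have := cnt_subset true (subsetU1 p X).
have := cnt_setU1_le false p X; have := cnt_setU1_le true p X.
by move=> *; apply/idP/idP; lia.
Qed.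

End Counting.

Lemma majE (n r : nat) (sigma : config n) (i : 'I_n) :
  maj r sigma i =
  ~~ (cnt true sigma (Gamma r i) < cnt false sigma (Gamma r i))%N.
Proof. by rewrite /maj; case: ifP. Qed.

Theorem claim2 (n r : nat) (sigma sigma' : config n) (i : 'I_n) :
  (1 <= r)%N ->
  (forall j : 'I_n, sigma' j = maj r sigma j) ->
  sigma' i != sigma' (ordS i) ->
  (* [i-r+1, i+r], the 2r cells i-r+1, ..., i+r mod n *)
  cnt false sigma (cycI n ((i : nat)%:Z - r%:Z + 1)%R (2 * r))
  = cnt true sigma (cycI n ((i : nat)%:Z - r%:Z + 1)%R (2 * r)).
Proof.
move=> _ sigma'E; rewrite !sigma'E !majE.
have n_gt0 : (0 < n)%N := leq_ltn_trans (leq0n i) (ltn_ord i).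
set I := cycI n _ (2 * r).
have GammaE : Gamma r i = cell n_gt0 ((i : nat)%:Z - r%:Z)%R |: I.
  by rewrite /Gamma addn1 cycI_cons.
have GammaSE :
    Gamma r (ordS i) = cell n_gt0 ((i : nat)%:Z - r%:Z + 1 + (2 * r)%:Z)%R |: I.
  rewrite /Gamma addn1 -cycI_rcons; apply: eq_cycI => //; rewrite /cyc.
  by rewrite -modz_nat modzDml -addn1 PoszD addrAC.
have [le_n_2r | lt_2r_n] := leqP n (2 * r).
  have I_full : I = setT by apply: cycI_full.
  by rewrite GammaE GammaSE I_full !setUT eqxx.
have even_I : ~~ odd #|I|.
  by rewrite (card_cycI n_gt0 _ (ltnW lt_2r_n)) mul2n odd_double.
apply: contraTeq => no_tie.
by rewrite GammaE GammaSE !majority_setU1 ?eqxx.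
Qed.
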